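(* Let $\alpha,\beta>0$ with $\beta>\alpha$, set $\tau=(\beta-\alpha)^{-1}$, and let $S_0>0$, $I_0>0$. Let $(S(t),I(t),R(t))$ be the solution of $$\dot S=-\frac{\beta SI}{S+I},\qquad \dot I=\frac{\beta SI}{S+I}-\alpha I,\qquad \dot R=\alpha I$$ with $S(0)=S_0$, $I(0)=I_0$. Then $\dot I(0)>0$ if and only if $\frac{\beta}{\alpha}-1>\frac{I_0}{S_0}$. Moreover, $I$ attains its maximum (over all real $t$) at $$t_{\mathrm{peak}}=\tau\log\left(\frac{S_0}{I_0}\left(\frac{\beta}{\alpha}-1\right)\right),$$ which is positive if and only if $\frac{\beta}{\alpha}-1>\frac{I_0}{S_0}$, and $$I(t_{\mathrm{peak}})=S_0\left(\frac{\beta}{\alpha}-1\right)\left(\frac{\alpha}{\beta}\left(1+\frac{I_0}{S_0}\right)\right)^{\beta/(\beta-\alpha)}.$$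
   Context: Modified SIR epidemiological model with recovery rate $\alpha$ and transmission rate $\beta$; $S,I,R$ are fractions of susceptible, infective and removed individuals. *)

From Stdlib Require Import Reals.
From Coquelicot Require Import Coquelicot.
Open Scope R_scope.

Definition is_SIR_solution (alpha beta : R) (S I Rm : R -> R) : Prop :=
  forall t : R,
    is_derive S t (- (beta * S t * I t / (S t + I t))) /\
    is_derive I t (beta * S t * I t / (S t + I t) - alpha * I t) /\
    is_derive Rm t (alpha * I t).

From Stdlib Require Import Reals Lra Psatz Classical.
From Coquelicot Require Import Coquelicot.
Open Scope R_scope.

(* While S and I stay positive, the ratio u = I/S satisfies u' = (beta - alpha) u
   and ln S + beta/(beta - alpha) ln (1 + u) is a first integral, so
   u = u0 exp ((beta - alpha) t) and S = S0 ((1 + u0)/(1 + u))^(beta/(beta - alpha)).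
   These closed forms are positive and continuous, hence the set of times where
   S, I > 0 is open and closed along segments from 0, i.e. all of R.  Finally
   I' = alpha S I/(S + I) (beta/alpha - 1 - u) with u increasing, so I grows until
   u reaches beta/alpha - 1, which happens exactly at t_peak, and decays afterwards. *)

Lemma ex_derive_continuity_pt (f : R -> R) (x : R) :
  ex_derive f x -> continuity_pt f x.
Proof.
  intros Hd; apply continuity_pt_filterlim.
  exact (ex_derive_continuous (V := R_NormedModule) f x Hd).
Qed.

Lemma is_derive_continuity_pt (f : R -> R) (x l : R) :
  is_derive f x l -> continuity_pt f x.
Proof. intros Hd; apply ex_derive_continuity_pt; exists l; exact Hd. Qed.

Lemma is_derive_eq_val (f : R -> R) (x l l' : R) :
  is_derive f x l -> l = l' -> is_derive f x l'.
Proof. now intros Hd <-. Qed.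

Lemma is_derive_0_eq (f : R -> R) (a b : R) :
  (forall x, Rmin a b <= x <= Rmax a b -> is_derive f x 0) -> f b = f a.
Proof.
  intros Hd.
  destruct (MVT_gen f a b (fun _ => 0)) as [c [_ Hc]].
  - intros x Hx; apply Hd; lra.
  - intros x Hx; exact (is_derive_continuity_pt _ _ _ (Hd x Hx)).
  - lra.
Qed.

Lemma le_of_derive_sign_change (f f' : R -> R) (c : R) :
  (forall t, is_derive f t (f' t)) ->
  (forall t, t <= c -> 0 <= f' t) -> (forall t, c <= t -> f' t <= 0) ->
  forall t, f t <= f c.
Proof.
  intros Hd Hinc Hdec t.
  destruct (MVT_gen f t c f') as [x [Hx Hmvt]].
  - intros x _; apply Hd.
  - intros x _; exact (is_derive_continuity_pt _ _ _ (Hd x)).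
  - destruct (Rle_dec t c) as [Htc|Htc].
    + rewrite Rmin_left, Rmax_right in Hx by lra.
      specialize (Hinc x (proj2 Hx)); nra.
    + rewrite Rmin_right, Rmax_left in Hx by lra.
      specialize (Hdec x (proj1 Hx)); nra.
Qed.

Lemma continuity_pt_eq_one_sided (f g : R -> R) (b c : R) :
  c <> b -> continuity_pt f b -> continuity_pt g b ->
  (forall r, Rmin c b < r < Rmax c b -> f r = g r) -> f b = g b.
Proof.
  intros Hcb Hf Hg Heq.
  apply continuity_pt_filterlim in Hf, Hg.
  assert (Hdist : 0 < Rabs (b - c)) by (apply Rabs_pos_lt; lra).
  assert (Hside : forall F : (R -> Prop) -> Prop, ProperFilter F ->
            filter_le F (locally b) -> F (fun r => g r = f r) -> f b = g b).
  { intros F FF HF Hfg.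
    apply (filterlim_locally_unique (F := F) f).
    - exact (filterlim_filter_le_1 f HF Hf).
    - exact (filterlim_ext_loc g f Hfg (filterlim_filter_le_1 g HF Hg)). }
  destruct (Rlt_or_le c b) as [Hlt|Hle].
  - apply (Hside (at_left b)); [apply at_left_proper_filter | apply filter_le_within |].
    exists (mkposreal _ Hdist); intros y Hy Hyb.
    change (Rabs (y - b) < Rabs (b - c)) in Hy.
    rewrite (Rabs_right (b - c)) in Hy by lra; apply Rabs_lt_between' in Hy.
    symmetry; apply Heq; rewrite Rmin_left, Rmax_right; lra.
  - apply (Hside (at_right b)); [apply at_right_proper_filter | apply filter_le_within |].
    exists (mkposreal _ Hdist); intros y Hy Hyb.
    change (Rabs (y - b) < Rabs (b - c)) in Hy.
    rewrite (Rabs_left (b - c)) in Hy by lra; apply Rabs_lt_between' in Hy.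
    symmetry; apply Heq; rewrite Rmin_right, Rmax_left; lra.
Qed.

Lemma continuity_pt_pos_locally (f : R -> R) (b : R) :
  continuity_pt f b -> 0 < f b ->
  exists d, 0 < d /\ forall s, Rabs (s - b) < d -> 0 < f s.
Proof.
  intros Hf Hb.
  destruct (Hf (f b) Hb) as [d [Hd Hball]].
  exists d; split; [exact Hd |]; intros s Hs.
  destruct (Req_dec s b) as [-> | Hne]; [exact Hb |].
  assert (Hclose : Rabs (f s - f b) < f b) by (apply Hball; repeat split; auto).
  apply Rabs_def2 in Hclose; lra.
Qed.

Lemma real_induction (P : R -> Prop) :
  (forall T, 0 <= T -> (forall s, 0 <= s < T -> P s) -> P T) ->
  (forall T, 0 <= T -> P T -> exists d, 0 < d /\ forall s, T < s < T + d -> P s) ->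
  forall t, 0 <= t -> P t.
Proof.
  intros Hclosed Hopen t Ht.
  apply NNPP; intros Hnot.
  set (E := fun T => 0 <= T /\ forall s, 0 <= s < T -> P s).
  assert (Hbound : forall T, E T -> T <= t).
  { intros T [_ HT]; apply Rnot_lt_le; intros HtT; apply Hnot, HT; lra. }
  destruct (completeness E) as [T [Hub Hlub]].
  - exists t; exact Hbound.
  - exists 0; split; [lra | intros s Hs; lra].
  - assert (HT0 : 0 <= T) by (apply Hub; split; [lra | intros s Hs; lra]).
    assert (HPbelow : forall s, 0 <= s < T -> P s).
    { intros s Hs; apply NNPP; intros Hs'.
      enough (T <= s) by lra.
      apply Hlub; intros x [_ Hx]; apply Rnot_lt_le; intros Hsx; apply Hs', Hx; lra. }
    assert (HPT : P T) by (apply Hclosed; assumption).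
    destruct (Hopen T HT0 HPT) as [d [Hd Habove]].
    assert (HTd : E (T + d)).
    { split; [lra |]; intros s Hs.
      destruct (Rtotal_order s T) as [Hlt | [-> | Hgt]];
        [apply HPbelow; lra | exact HPT | apply Habove; lra]. }
    specialize (Hub _ HTd); lra.
Qed.

Lemma R_connected_ind (P : R -> Prop) :
  (forall b, (forall r, Rmin 0 b <= r <= Rmax 0 b -> r <> b -> P r) -> P b) ->
  (forall b, P b -> exists d, 0 < d /\ forall s, Rabs (s - b) < d -> P s) ->
  forall t, P t.
Proof.
  intros Hclosed Hopen.
  assert (Hfwd : forall t, 0 <= t -> P t).
  { apply real_induction.
    - intros T HT Hbelow; apply Hclosed.
      rewrite Rmin_left, Rmax_right by lra; intros r Hr Hne; apply Hbelow; lra.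
    - intros T _ HPT; destruct (Hopen T HPT) as [d [Hd Hnear]].
      exists d; split; [exact Hd |]; intros s Hs.
      apply Hnear; rewrite Rabs_right; lra. }
  assert (Hbwd : forall t, 0 <= t -> P (- t)).
  { apply (real_induction (fun t => P (- t))).
    - intros T HT Hbelow; apply Hclosed.
      rewrite Rmin_right, Rmax_left by lra; intros r Hr Hne.
      rewrite <- (Ropp_involutive r); apply Hbelow; lra.
    - intros T _ HPT; destruct (Hopen (- T) HPT) as [d [Hd Hnear]].
      exists d; split; [exact Hd |]; intros s Hs.
      apply Hnear; rewrite Rabs_left; lra. }
  intros t; destruct (Rle_or_lt 0 t) as [Ht | Ht]; [now apply Hfwd |].
  rewrite <- (Ropp_involutive t); apply Hbwd; lra.
Qed.

Lemma infection_rate_factor (alpha beta s i : R) :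
  alpha <> 0 -> s <> 0 -> s + i <> 0 ->
  beta * s * i / (s + i) - alpha * i
  = alpha * s * i / (s + i) * (beta / alpha - 1 - i / s).
Proof. intros; field; auto. Qed.

Section SIR.

Variables (alpha beta : R) (S I Rm : R -> R).
Hypotheses (Halpha : 0 < alpha) (Halpha_beta : alpha < beta).
Hypothesis Hsol : is_SIR_solution alpha beta S I Rm.
Hypotheses (HS0 : 0 < S 0) (HI0 : 0 < I 0).

Let k := beta - alpha.
Let p := beta / k.
Let ratio_peak := beta / alpha - 1.
Let ratio0 := I 0 / S 0.
Let ratio t := ratio0 * exp (k * t).
Let S_explicit t := S 0 * Rpower ((1 + ratio0) / (1 + ratio t)) p.
Let I_explicit t := ratio t * S_explicit t.
Let tpeak := / k * ln (S 0 / I 0 * ratio_peak).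
Let positive_at t := 0 < S t /\ 0 < I t.

Let k_pos : 0 < k. Proof. unfold k; lra. Qed.
Let ratio0_pos : 0 < ratio0. Proof. apply Rdiv_lt_0_compat; assumption. Qed.
Let ratio_pos t : 0 < ratio t.
Proof. apply Rmult_lt_0_compat; [exact ratio0_pos | apply exp_pos]. Qed.

Lemma scaled_ratio_derive r : positive_at r ->
  is_derive (fun t => I t / S t * exp (- (k * t))) r 0.
Proof.
  intros [Sr Ir]; destruct (Hsol r) as [dS [dI _]].
  eapply is_derive_eq_val.
  - apply (is_derive_mult (fun t => I t / S t) (fun t => exp (- (k * t)))).
    + apply is_derive_div; [exact dI | exact dS | lra].
    + auto_derive; [constructor | reflexivity].
    + intros; apply Rmult_comm.
  - simpl; unfold plus, mult; simpl; unfold k; field; lra.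
Qed.

Lemma log_invariant_derive r : positive_at r ->
  is_derive (fun t => ln (S t) + p * ln (1 + I t / S t)) r 0.
Proof.
  intros [Sr Ir]; destruct (Hsol r) as [dS [dI _]].
  assert (Hq : 0 < 1 + I r / S r).
  { assert (0 < I r / S r) by (apply Rdiv_lt_0_compat; assumption); lra. }
  eapply is_derive_eq_val.
  - apply (is_derive_plus (fun t => ln (S t)) (fun t => p * ln (1 + I t / S t))).
    + apply (is_derive_comp ln S); [apply is_derive_ln; exact Sr | exact dS].
    + apply is_derive_scal, (is_derive_comp ln (fun t => 1 + I t / S t)).
      * apply is_derive_ln; exact Hq.
      * apply (is_derive_plus (fun _ => 1) (fun t => I t / S t)).
        -- apply is_derive_const.
        -- apply is_derive_div; [exact dI | exact dS | lra].
  - simpl; unfold plus, scal, mult, zero; simpl; unfold mult; simpl; unfold p, k.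
    field; repeat split; lra.
Qed.

Lemma explicit_on_segment s :
  (forall r, Rmin 0 s <= r <= Rmax 0 s -> positive_at r) ->
  S s = S_explicit s /\ I s = I_explicit s.
Proof.
  intros Hseg.
  assert (Ps : positive_at s) by (apply Hseg; split; [apply Rmin_r | apply Rmax_r]).
  destruct Ps as [Ss Is].
  assert (Hratio : I s / S s = ratio s).
  { pose proof (is_derive_0_eq _ 0 s (fun r Hr => scaled_ratio_derive r (Hseg r Hr))) as HV.
    simpl in HV; rewrite Rmult_0_r, Ropp_0, exp_0, Rmult_1_r in HV.
    unfold ratio, ratio0; rewrite <- HV, Rmult_assoc, <- exp_plus.
    replace (- (k * s) + k * s) with 0 by ring; rewrite exp_0; ring. }
  assert (HS : S s = S_explicit s).
  { pose proof (is_derive_0_eq _ 0 s (fun r Hr => log_invariant_derive r (Hseg r Hr))) as HW.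
    simpl in HW; rewrite Hratio in HW; fold ratio0 in HW.
    unfold S_explicit, Rpower.
    rewrite <- (exp_ln (S s)), <- (exp_ln (S 0)), <- exp_plus by assumption.
    f_equal; rewrite ln_div by (pose proof (ratio_pos s); lra); lra. }
  split; [exact HS |].
  unfold I_explicit; rewrite <- HS, <- Hratio; field; lra.
Qed.

Let S_explicit_pos t : 0 < S_explicit t.
Proof. apply Rmult_lt_0_compat; [exact HS0 | apply exp_pos]. Qed.

Let I_explicit_pos t : 0 < I_explicit t.
Proof. apply Rmult_lt_0_compat; [apply ratio_pos | apply S_explicit_pos]. Qed.

Let S_explicit_continuous t : continuity_pt S_explicit t.
Proof.
  apply ex_derive_continuity_pt; unfold S_explicit, Rpower, ratio.
  pose proof (exp_pos (k * t)); pose proof ratio0_pos.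
  assert (Hden : 0 < 1 + ratio0 * exp (k * t)) by nra.
  auto_derive; repeat split; [lra | apply Rdiv_lt_0_compat; lra].
Qed.

Let I_explicit_continuous t : continuity_pt I_explicit t.
Proof.
  apply continuity_pt_mult; [| apply S_explicit_continuous].
  apply ex_derive_continuity_pt; unfold ratio; auto_derive; constructor.
Qed.

Let S_continuous t : continuity_pt S t.
Proof. destruct (Hsol t) as [dS _]; exact (is_derive_continuity_pt _ _ _ dS). Qed.

Let I_continuous t : continuity_pt I t.
Proof. destruct (Hsol t) as [_ [dI _]]; exact (is_derive_continuity_pt _ _ _ dI). Qed.

Lemma positive_everywhere t : positive_at t.
Proof.
  apply R_connected_ind; clear t.
  - intros b Hbelow.
    destruct (Req_dec b 0) as [-> | Hb0]; [split; assumption |].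
    assert (Hexpl : forall r, Rmin 0 b < r < Rmax 0 b ->
                      S r = S_explicit r /\ I r = I_explicit r).
    { intros r Hr; apply explicit_on_segment; intros r' Hr'.
      apply Hbelow; revert Hr Hr'; unfold Rmin, Rmax;
        destruct (Rle_dec 0 b), (Rle_dec 0 r); intros; lra. }
    split.
    + rewrite (continuity_pt_eq_one_sided S S_explicit b 0); auto.
      intros r Hr; apply Hexpl, Hr.
    + rewrite (continuity_pt_eq_one_sided I I_explicit b 0); auto.
      intros r Hr; apply Hexpl, Hr.
  - intros b [Sb Ib].
    destruct (continuity_pt_pos_locally S b (S_continuous b) Sb) as [d1 [Hd1 HS1]].
    destruct (continuity_pt_pos_locally I b (I_continuous b) Ib) as [d2 [Hd2 HI2]].
    exists (Rmin d1 d2); split; [apply Rmin_pos; assumption |].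
    intros s Hs; pose proof (Rmin_l d1 d2); pose proof (Rmin_r d1 d2).
    split; [apply HS1 | apply HI2]; lra.
Qed.

Lemma explicit_everywhere t : S t = S_explicit t /\ I t = I_explicit t.
Proof. apply explicit_on_segment; intros r _; apply positive_everywhere. Qed.

Let I_div_S t : I t / S t = ratio t.
Proof.
  destruct (explicit_everywhere t) as [-> ->]; unfold I_explicit.
  field; apply Rgt_not_eq, S_explicit_pos.
Qed.

Let rate_coef t := alpha * S t * I t / (S t + I t).

Let rate_coef_pos t : 0 < rate_coef t.
Proof.
  destruct (positive_everywhere t) as [St It].
  apply Rdiv_lt_0_compat; [apply Rmult_lt_0_compat; [apply Rmult_lt_0_compat |] | ]; lra.
Qed.

Lemma I_derive t : is_derive I t (rate_coef t * (ratio_peak - ratio t)).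
Proof.
  destruct (Hsol t) as [_ [dI _]]; destruct (positive_everywhere t) as [St It].
  rewrite <- I_div_S; eapply is_derive_eq_val; [exact dI |].
  apply infection_rate_factor; lra.
Qed.

Let ratio_0 : ratio 0 = ratio0.
Proof. unfold ratio; rewrite Rmult_0_r, exp_0, Rmult_1_r; reflexivity. Qed.

Let ratio_lt_iff t t' : ratio t < ratio t' <-> t < t'.
Proof.
  unfold ratio; split; intros Hlt.
  - apply Rmult_lt_reg_l, exp_lt_inv, Rmult_lt_reg_l in Hlt; assumption.
  - apply Rmult_lt_compat_l, exp_increasing, Rmult_lt_compat_l; assumption.
Qed.

Let ratio_le_iff t t' : ratio t <= ratio t' <-> t <= t'.
Proof.
  destruct (ratio_lt_iff t' t) as [Hlt Hgt].
  split; intros Hle; apply Rnot_lt_le; intros H; [apply Hgt in H | apply Hlt in H]; lra.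
Qed.

Let ratio_peak_pos : 0 < ratio_peak.
Proof.
  unfold ratio_peak; apply Rlt_0_minus.
  rewrite <- (Rdiv_diag alpha) by lra; apply Rmult_lt_compat_r; [apply Rinv_0_lt_compat |]; lra.
Qed.

Let ratio_tpeak : ratio tpeak = ratio_peak.
Proof.
  assert (HX : 0 < S 0 / I 0 * ratio_peak)
    by (apply Rmult_lt_0_compat; [apply Rdiv_lt_0_compat |]; assumption).
  unfold ratio, tpeak; rewrite <- Rmult_assoc, Rinv_r, Rmult_1_l, exp_ln by lra.
  unfold ratio0; field; lra.
Qed.

Lemma Derive_I_0_pos_iff : Derive I 0 > 0 <-> ratio_peak > ratio0.
Proof.
  rewrite (is_derive_unique _ _ _ (I_derive 0)), ratio_0.
  pose proof (rate_coef_pos 0); split; intros; nra.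
Qed.

Lemma I_le_peak t : I t <= I tpeak.
Proof.
  apply (le_of_derive_sign_change I (fun t => rate_coef t * (ratio_peak - ratio t)));
    [exact I_derive | intros t' Ht' | intros t' Ht'];
    pose proof (rate_coef_pos t'); rewrite <- ratio_tpeak;
    apply ratio_le_iff in Ht'; nra.
Qed.

Lemma tpeak_pos_iff : 0 < tpeak <-> ratio_peak > ratio0.
Proof. rewrite <- ratio_tpeak, <- ratio_0; unfold Rgt; symmetry; apply ratio_lt_iff. Qed.

Lemma I_peak :
  I tpeak = S 0 * ratio_peak * Rpower (alpha / beta * (1 + ratio0)) (beta / (beta - alpha)).
Proof.
  destruct (explicit_everywhere tpeak) as [_ ->]; unfold I_explicit, S_explicit.
  rewrite ratio_tpeak.
  replace ((1 + ratio0) / (1 + ratio_peak)) with (alpha / beta * (1 + ratio0))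
    by (unfold ratio_peak; field; lra).
  unfold p, k; ring.
Qed.

End SIR.

Theorem mainTheorem2 (alpha beta S0 I0 : R) (S I Rm : R -> R) :
  0 < alpha -> 0 < beta -> alpha < beta -> 0 < S0 -> 0 < I0 ->
  is_SIR_solution alpha beta S I Rm ->
  S 0 = S0 -> I 0 = I0 ->
  let tau := / (beta - alpha) in
  let tpeak := tau * ln (S0 / I0 * (beta / alpha - 1)) in
  (Derive I 0 > 0 <-> beta / alpha - 1 > I0 / S0) /\
  (forall t : R, I t <= I tpeak) /\
  (0 < tpeak <-> beta / alpha - 1 > I0 / S0) /\
  I tpeak = S0 * (beta / alpha - 1) *
            Rpower (alpha / beta * (1 + I0 / S0)) (beta / (beta - alpha)).
Proof.
  intros Halpha _ Halpha_beta HS0 HI0 Hsol <- <- tau tpeak.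
  split; [| split; [| split]].
  - eapply Derive_I_0_pos_iff; eassumption.
  - eapply I_le_peak; eassumption.
  - eapply tpeak_pos_iff; eassumption.
  - eapply I_peak; eassumption.
Qed.
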